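(* Let $D=(V(D),A(D),w)$ be a weighted digraph and let $G=UG(D)$ be its weighted underlying graph. (a) Suppose $|V(D)|\ge 2$ and let $k$ be the minimum of $w(X,Y)$ over all partitions $(X,Y)$ of $V(D)$ into two nonempty parts. Then $r^+(D)+k\le \mathrm{mac}(D)$. (b) $\frac{\mathrm{mac}(G)}{2}\le \mathrm{mac}(D)\le \frac{\mathrm{mac}(G)+r^+(D)}{2}$. (c) $\frac{\mathrm{mac}(G)/2+r^+(D)}{2}\le \mathrm{mac}(D)\le \frac{\mathrm{mac}(G)+r^+(D)}{2}$. (d) Let $\chi$ be the chromatic number of $G$. If $\chi$ is even then $\left(\frac14+\frac{1}{4(\chi-1)}\right)w(D)\le \mathrm{mac}(D)$, and if $\chi$ is odd then $\left(\frac14+\frac{1}{4\chi}\right)w(D)\le\mathrm{mac}(D)$.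
   Context: A weighted digraph $D=(V(D),A(D),w)$ is a digraph without loops or parallel arcs (a pair of opposite arcs $xy,yx$ is allowed) together with a weight function $w:A(D)\to\mathbb{R}_{\ge 0}$; for a subgraph $H$, $w(H)$ is the sum of the weights of its arcs. For a partition $(X,Y)$ of $V(D)$, the directed cut (dicut) $(X,Y)$ consists of the arcs going from $X$ to $Y$, and $w(X,Y)$ is their total weight. $\mathrm{mac}(D)$ is the maximum of $w(X,Y)$ over all partitions $(X,Y)$ of $V(D)$. For a weighted undirected graph $G$, $\mathrm{mac}(G)$ is the maximum total weight of edges with one end in $X$ and the other in $Y$, over partitions $(X,Y)$ of $V(G)$. The underlying graph $UG(D)$ has vertex set $V(D)$, with $x,y$ adjacent iff there is an arc between them; the edge weight is $w(xy)$ if only $xy\in A(D)$ and $w(xy)+w(yx)$ if both $xy,yx\in A(D)$. For $v\in V(D)$, $w^+(v)$ ($w^-(v)$) is the total weight of arcs leaving (entering) $v$, $r(v)=w^+(v)-w^-(v)$, and $r^+(D)=\sum_{r(x)>0}r(x)=\frac12\sum_{x\in V(D)}|r(x)|$. *)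

From mathcomp Require Import all_boot all_order all_algebra.
Set Implicit Arguments. Unset Strict Implicit. Unset Printing Implicit Defensive.
Import Order.TTheory GRing.Theory Num.Theory.
Local Open Scope ring_scope.

(* A weighted digraph on a finite vertex type V is given by an arc relation
   A : rel V (irreflexive: no loops; A x y and A y x may both hold) and a
   weight function w : V -> V -> R, nonnegative on arcs.  Only the values
   w x y with A x y are ever used. *)

Section Digraph.
Variables (R : realFieldType) (V : finType) (A : rel V) (w : V -> V -> R).

Definition weighted_digraph : Prop :=
  (forall x, ~~ A x x) /\ (forall x y, A x y -> 0 <= w x y).

Definition dcut (X Y : {set V}) : R :=
  \sum_(x in X) \sum_(y in Y | A x y) w x y.

Definition mac_D : R := \big[Num.max/0]_(X : {set V}) dcut X (~: X).

Definition wD : R := \sum_x \sum_(y | A x y) w x y.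

Definition wout (v : V) : R := \sum_(y | A v y) w v y.
Definition win (v : V) : R := \sum_(y | A y v) w y v.
Definition rdeg (v : V) : R := wout v - win v.
Definition rplus : R := \sum_(v | 0 < rdeg v) rdeg v.

Definition ug_adj (x y : V) : bool := A x y || A y x.
Definition ug_w (x y : V) : R :=
  (if A x y then w x y else 0) + (if A y x then w y x else 0).

Definition ucut (X : {set V}) : R :=
  \sum_(x in X) \sum_(y in ~: X | ug_adj x y) ug_w x y.
Definition mac_G : R := \big[Num.max/0]_(X : {set V}) ucut X.

Definition proper_colouring (k : nat) (c : V -> 'I_k) : Prop :=
  forall x y, ug_adj x y -> c x != c y.
Definition colourable (k : nat) : Prop := exists c : V -> 'I_k, proper_colouring c.
Definition chromatic_number (chi : nat) : Prop :=
  colourable chi /\ forall k, colourable k -> (chi <= k)%N.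

End Digraph.

(* Write w(X,Y) for the weight of the arcs from X to Y and X' for the
   complement of X.  Three identities carry parts (a)-(c):
   - the undirected cut of X in UG(D) is w(X,X') + w(X',X), so mac(G) is
     at most 2 mac(D) (the better of the two directions of X);
   - summing r(v) = w^+(v) - w^-(v) over X gives w(X,X') - w(X',X), hence
     w(X,X') = (ucut X + sum_X r) / 2 <= (mac(G) + r^+(D)) / 2;
   - for the set P of vertices with r > 0 the sum of r over P is r^+(D),
     so w(P,P') = r^+(D) + w(P',P), which is >= r^+(D) + k when P is a
     proper nonempty subset and gives (a), and >= r^+(D) in general.
   Part (d) is an averaging argument: given a proper colouring with k
   colours, average the dicut (c^-1(S), c^-1(S)') over all m-sets S of
   colours.  An arc xy (so c x <> c y) is cut by C(k-2, m-1) of the C(k, m)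
   choices of S, a fraction m(k-m)/(k(k-1)); taking m = floor(chi/2) and
   computing this fraction gives both cases of (d). *)

From mathcomp Require Import all_boot all_order all_algebra.
From mathcomp Require Import ring lra zify.
Import Order.TTheory GRing.Theory Num.Theory.
Local Open Scope ring_scope.
Set Implicit Arguments. Unset Strict Implicit.

(* Among the m-subsets of 'I_k (m > 0), those containing i but not j,
   for i <> j, are the sets i |: T with T an (m-1)-subset of the k - 2
   remaining elements. *)
Lemma card_separating_draws (k m : nat) (i j : 'I_k) : i != j -> (0 < m)%N ->
  #|[set S : {set 'I_k} | [&& #|S| == m, i \in S & j \notin S]]| = 'C(k - 2, m.-1).
Proof.
move=> neq_ij m_gt0.
have card_rest : #|~: [set i; j]| = (k - 2)%N.
  by have := cardsC [set i; j]; rewrite cards2 neq_ij card_ord; lia.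
rewrite -card_rest -cards_draws.
set D := [set T : {set 'I_k} | (T \subset ~: [set i; j]) & (#|T| == m.-1)].
have notin_i (T : {set 'I_k}) : T \subset ~: [set i; j] -> i \notin T.
  by move=> sT; apply/negP => /(subsetP sT); rewrite !inE eqxx.
have notin_j (T : {set 'I_k}) : T \subset ~: [set i; j] -> j \notin T.
  by move=> sT; apply/negP => /(subsetP sT); rewrite !inE eqxx orbT.
have add_i_inj : {in D &, injective (fun T => i |: T)}.
  move=> T1 T2; rewrite !inE => /andP[s1 _] /andP[s2 _] eqT.
  by rewrite -(setU1K (notin_i _ s1)) -(setU1K (notin_i _ s2)) eqT.
rewrite -(card_in_imset add_i_inj); apply: eq_card => S.
rewrite inE; apply/idP/imsetP.
  move=> /and3P [/eqP cardS iS jS]; exists (S :\ i); last by rewrite setD1K.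
  rewrite inE; apply/andP; split.
    apply/subsetP => x; rewrite !inE => /andP [xi xS]; rewrite negb_or xi /=.
    by apply/eqP => xj; move: jS; rewrite -xj xS.
  by apply/eqP; have := cardsD1 i S; rewrite iS cardS add1n => ->.
case=> T; rewrite inE => /andP [sT /eqP cardT] ->.
rewrite cardsU1 (notin_i _ sT) cardT setU11 /= !inE negb_or (eq_sym j) neq_ij.
by rewrite (notin_j _ sT) andbT; apply/eqP; lia.
Qed.

(* The fraction of m-subsets of 'I_k separating two given points:
   C(k-2, m-1) / C(k, m) = m (k - m) / (k (k - 1)). *)
Lemma separating_draws_ratio (k m : nat) : (0 < m)%N -> (m < k)%N ->
  ('C(k - 2, m.-1) * (k * (k - 1)) = 'C(k, m) * (m * (k - m)))%N.
Proof.
case: m => [//|p] _; case: k => [//|[//|n]] lt_pn.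
have diag := mul_bin_diag n.+2 p.
have down := mul_bin_down n.+1 p.
have -> : (n.+2 - 2 = n)%N by lia.
have -> : (n.+2 - p.+1 = n.+1 - p)%N by lia.
have -> : (n.+2 - 1 = n.+1)%N by lia.
rewrite /= mulnC -mulnA down (mulnC (n.+1 - p)%N) mulnA diag; lia.
Qed.

Definition colour_ratio (R : realFieldType) (k m : nat) : R :=
  (m * (k - m))%N%:R / (k * (k - 1))%N%:R.

Lemma colour_ratio_even (R : realFieldType) (chi : nat) : ~~ odd chi -> (1 < chi)%N ->
  1 / 4 + 1 / (4 * (chi%:R - 1)) = colour_ratio R chi chi./2.
Proof.
move=> even_chi chi_gt1.
have [m chiE] : exists m, chi = (m + m)%N.
  by exists chi./2; have := odd_double_half chi; rewrite (negbTE even_chi); lia.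
subst chi; rewrite /colour_ratio.
have -> : ((m + m)./2 = m)%N by lia.
have -> : (m + m - m = m)%N by lia.
rewrite !natrM natrB; last by lia.
rewrite natrD; have : (1 : R) <= m%:R by rewrite ler1n; lia.
by move: (m%:R) => x x_ge1; field; lra.
Qed.

Lemma colour_ratio_odd (R : realFieldType) (chi : nat) : odd chi -> (1 < chi)%N ->
  1 / 4 + 1 / (4 * chi%:R) = colour_ratio R chi chi./2.
Proof.
move=> odd_chi chi_gt1.
have [m chiE] : exists m, chi = (m + m + 1)%N.
  by exists chi./2; have := odd_double_half chi; rewrite odd_chi; lia.
subst chi; rewrite /colour_ratio.
have -> : ((m + m + 1)./2 = m)%N by lia.
have -> : (m + m + 1 - m = m + 1)%N by lia.
have -> : (m + m + 1 - 1 = m + m)%N by lia.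
rewrite !natrM !natrD; have : (1 : R) <= m%:R by rewrite ler1n; lia.
by move: (m%:R) => x x_ge1; field; apply/andP; split; rewrite gt_eqF //; lra.
Qed.

Section Digraph.
Variables (R : realFieldType) (V : finType) (A : rel V) (w : V -> V -> R).
Hypothesis wdD : weighted_digraph A w.

(* The arc weight extended by 0 to non-arcs, so that all sums over arcs
   become plain double sums. *)
Definition aw (x y : V) : R := if A x y then w x y else 0.

Lemma aw_ge0 (x y : V) : 0 <= aw x y.
Proof. by rewrite /aw; case: ifP => // /wdD.2. Qed.

Lemma dcutE (X Y : {set V}) : dcut A w X Y = \sum_(x in X) \sum_(y in Y) aw x y.
Proof. by apply: eq_bigr => x _; rewrite big_mkcondr. Qed.

Lemma dcut_ge0 (X Y : {set V}) : 0 <= dcut A w X Y.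
Proof. by rewrite dcutE; do 2!apply: sumr_ge0 => ? _; exact: aw_ge0. Qed.

Lemma dcut0l (Y : {set V}) : dcut A w set0 Y = 0.
Proof. by rewrite /dcut big_set0. Qed.

Lemma dcut0r (X : {set V}) : dcut A w X set0 = 0.
Proof. by rewrite dcutE big1 // => x _; rewrite big_set0. Qed.

Lemma wDE : wD A w = \sum_x \sum_y aw x y.
Proof. by apply: eq_bigr => x _; rewrite big_mkcond. Qed.

Lemma sum_setC (F : V -> R) (X : {set V}) :
  \sum_x F x = \sum_(x in X) F x + \sum_(x in ~: X) F x.
Proof. by rewrite (bigID (mem X)) /=; congr (_ + _); apply: eq_bigl => x; rewrite inE. Qed.

(* The imbalance of a set: sum_(x in X) r(x) = w(X,X') - w(X',X), since arcs
   inside X contribute to both w^+ and w^- and cancel. *)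
Lemma sum_rdeg (X : {set V}) :
  \sum_(x in X) rdeg A w x = dcut A w X (~: X) - dcut A w (~: X) X.
Proof.
have out_sum : \sum_(x in X) wout A w x = dcut A w X X + dcut A w X (~: X).
  rewrite !dcutE -big_split /=; apply: eq_bigr => x _.
  by rewrite /wout big_mkcond -(sum_setC (aw x)).
have in_sum : \sum_(x in X) win A w x = dcut A w X X + dcut A w (~: X) X.
  rewrite !dcutE (exchange_big _ _ _ (mem X) (mem X)).
  rewrite (exchange_big _ _ _ (mem (~: X)) (mem X)) -big_split /=.
  by apply: eq_bigr => x _; rewrite /win big_mkcond -(sum_setC (aw^~ x)).
rewrite /rdeg sumrB out_sum in_sum; lra.
Qed.

Lemma ucutE (X : {set V}) : ucut A w X = dcut A w X (~: X) + dcut A w (~: X) X.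
Proof.
rewrite !dcutE [in X in _ = _ + X]exchange_big -big_split /=.
apply: eq_bigr => x _; rewrite big_mkcondr -big_split /=.
apply: eq_bigr => y _; rewrite /ug_adj /ug_w /aw.
by case: (A x y); case: (A y x); rewrite ?addr0.
Qed.

Lemma mac_ge (X : {set V}) : dcut A w X (~: X) <= mac_D A w.
Proof. exact: (le_bigmax _ (fun X => dcut A w X (~: X))). Qed.

Lemma mac_ge0 : 0 <= mac_D A w.
Proof. exact: bigmax_ge_id. Qed.

Lemma macG_ge (X : {set V}) : ucut A w X <= mac_G A w.
Proof. exact: (le_bigmax _ (ucut A w)). Qed.

Lemma macG_ge0 : 0 <= mac_G A w.
Proof. exact: bigmax_ge_id. Qed.

Definition Ppos : {set V} := [set x | 0 < rdeg A w x].

Lemma rplusE : rplus A w = \sum_(x in Ppos) rdeg A w x.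
Proof. by apply: eq_bigl => x; rewrite inE. Qed.

Lemma rplus_ge0 : 0 <= rplus A w.
Proof. by apply: sumr_ge0 => x /ltW. Qed.

Lemma sum_rdeg_le_rplus (X : {set V}) : \sum_(x in X) rdeg A w x <= rplus A w.
Proof.
rewrite /rplus big_mkcond [X in _ <= X]big_mkcond /=; apply: ler_sum => x _.
case: (x \in X); case: ifP => // pos_x; first by rewrite leNgt pos_x.
exact: ltW.
Qed.

Lemma dcut_Ppos : dcut A w Ppos (~: Ppos) = rplus A w + dcut A w (~: Ppos) Ppos.
Proof. by rewrite rplusE sum_rdeg subrK. Qed.

(* Part (a): r^+(D) + k <= mac(D) for the minimum k of the dicuts between
   nonempty parts.  When Ppos or its complement is empty, r^+(D) = 0. *)
Lemma rplus_mincut_le_mac (k : R) :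
  (exists X : {set V}, [/\ X != set0, ~: X != set0 & dcut A w X (~: X) = k]) ->
  (forall X : {set V}, X != set0 -> ~: X != set0 -> k <= dcut A w X (~: X)) ->
  rplus A w + k <= mac_D A w.
Proof.
move=> [X0 [_ _ <-]] k_min.
have [P_empty | P_nonempty] := eqVneq Ppos set0.
  by rewrite rplusE P_empty big_set0 add0r mac_ge.
have [coP_empty | coP_nonempty] := eqVneq (~: Ppos) set0.
  rewrite rplusE sum_rdeg coP_empty dcut0l dcut0r subr0 add0r; exact: mac_ge.
have := k_min _ coP_nonempty; rewrite setCK => /(_ P_nonempty).
have := mac_ge Ppos; rewrite dcut_Ppos; lra.
Qed.

Lemma macG_half_le_mac : mac_G A w / 2 <= mac_D A w.
Proof.
suff : mac_G A w <= 2 * mac_D A w by lra.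
apply: bigmax_le => [|X]; first by have := mac_ge0; lra.
by rewrite ucutE; have := mac_ge X; have := mac_ge (~: X); rewrite setCK; lra.
Qed.

(* Part (b), upper bound: 2 w(X,X') = ucut X + (imbalance of X). *)
Lemma mac_le_macG_rplus : mac_D A w <= (mac_G A w + rplus A w) / 2.
Proof.
apply: bigmax_le => [|X]; first by have := macG_ge0; have := rplus_ge0; lra.
have := sum_rdeg_le_rplus X; rewrite sum_rdeg.
by have := macG_ge X; rewrite ucutE; lra.
Qed.

(* Part (c), lower bound: average of (b) with r^+(D) <= w(Ppos, Ppos'). *)
Lemma macG_rplus_le_mac : (mac_G A w / 2 + rplus A w) / 2 <= mac_D A w.
Proof.
have rplus_le : rplus A w <= mac_D A w.
  by have := mac_ge Ppos; have := dcut_ge0 (~: Ppos) Ppos; rewrite dcut_Ppos; lra.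
by have := macG_half_le_mac; lra.
Qed.

Lemma wD_eq0_of_colouring (k : nat) (c : V -> 'I_k) :
  proper_colouring A c -> (k <= 1)%N -> wD A w = 0.
Proof.
move=> proper_c k_le1; rewrite wDE big1 // => x _; rewrite big1 // => y _.
rewrite /aw; case: ifP => // Axy.
have := proper_c x y; rewrite /ug_adj Axy => /(_ isT).
suff -> : c x = c y by rewrite eqxx.
by apply: ord_inj; have := ltn_ord (c x); have := ltn_ord (c y); lia.
Qed.

(* The colouring bound: for a proper k-colouring c and 0 < m < k some
   dicut of the form (c^-1(S), c^-1(S)') with #|S| = m has weight at least
   m (k - m) / (k (k - 1)) w(D), since that is their average. *)
Lemma colour_bound (k m : nat) (c : V -> 'I_k) :
  proper_colouring A c -> (0 < m)%N -> (m < k)%N ->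
  colour_ratio R k m * wD A w <= mac_D A w.
Proof.
move=> proper_c m_gt0 lt_mk.
set F := [set S : {set 'I_k} | #|S| == m].
have cutE (S : {set 'I_k}) : dcut A w (c @^-1: S) (~: (c @^-1: S)) =
    \sum_x \sum_y (if (c x \in S) && (c y \notin S) then aw x y else 0).
  rewrite dcutE big_mkcond; apply: eq_bigr => x _; rewrite !inE.
  case: (c x \in S) => /=; last by rewrite big1.
  by rewrite big_mkcond; apply: eq_bigr => y _; rewrite !inE.
have sum_le : \sum_(S in F) dcut A w (c @^-1: S) (~: (c @^-1: S)) <= mac_D A w *+ #|F|.
  by rewrite -sumr_const; apply: ler_sum => S _; exact: mac_ge.
have sum_cuts : \sum_(S in F) dcut A w (c @^-1: S) (~: (c @^-1: S)) =
    ('C(k - 2, m.-1))%:R * wD A w.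
  under eq_bigr => S _ do rewrite cutE.
  rewrite exchange_big wDE mulr_sumr; apply: eq_bigr => x _.
  rewrite exchange_big mulr_sumr; apply: eq_bigr => y _.
  rewrite -big_mkcondr (eq_bigl (mem [set S in F | (c x \in S) && (c y \notin S)]));
    last by move=> S; rewrite !inE.
  rewrite sumr_const mulr_natl /aw; case: ifP => Axy; last by rewrite !mul0rn.
  have neq_cxy : c x != c y by apply: proper_c; rewrite /ug_adj Axy.
  rewrite -(card_separating_draws neq_cxy m_gt0); congr (_ *+ _).
  by apply: eq_card => S; rewrite !inE andbA.
have card_F : #|F| = 'C(k, m) by rewrite card_draws card_ord.
have bin_gt0 : (0 < 'C(k, m))%N by rewrite bin_gt0 ltnW.
have ratioE : colour_ratio R k m = ('C(k - 2, m.-1))%:R / ('C(k, m))%:R.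
  apply/eqP; rewrite eqr_div ?pnatr_eq0 -?lt0n // -?natrM ?eqr_nat;
    last by rewrite muln_gt0; apply/andP; split; lia.
  by rewrite separating_draws_ratio // mulnC.
by rewrite ratioE mulrAC ler_pdivrMr ?ltr0n // mulr_natr -card_F -sum_cuts.
Qed.

Lemma chromatic_bound (chi : nat) : chromatic_number A chi ->
  (~~ odd chi -> (1 / 4 + 1 / (4 * (chi%:R - 1))) * wD A w <= mac_D A w) /\
  (odd chi -> (1 / 4 + 1 / (4 * chi%:R)) * wD A w <= mac_D A w).
Proof.
move=> [[c proper_c] _].
have [chi_le1 | chi_gt1] := leqP chi 1.
  by rewrite (wD_eq0_of_colouring proper_c chi_le1) !mulr0; split => _; exact: mac_ge0.
have bound := colour_bound proper_c (_ : (0 < chi./2)%N) (_ : (chi./2 < chi)%N).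
split => [even_chi | odd_chi].
  by rewrite colour_ratio_even //; apply: bound; lia.
by rewrite colour_ratio_odd //; apply: bound; lia.
Qed.

End Digraph.

Theorem mainTheorem1 (R : realFieldType) (V : finType) (A : rel V) (w : V -> V -> R) :
  weighted_digraph A w ->
  (* (a) *)
  ((1 < #|V|)%N -> forall k : R,
     (exists X : {set V}, [/\ X != set0, ~: X != set0 & dcut A w X (~: X) = k]) ->
     (forall X : {set V}, X != set0 -> ~: X != set0 -> k <= dcut A w X (~: X)) ->
     rplus A w + k <= mac_D A w) /\
  (* (b) *)
  (mac_G A w / 2 <= mac_D A w /\ mac_D A w <= (mac_G A w + rplus A w) / 2) /\
  (* (c) *)
  ((mac_G A w / 2 + rplus A w) / 2 <= mac_D A w /\
     mac_D A w <= (mac_G A w + rplus A w) / 2) /\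
  (* (d) *)
  (forall chi : nat, chromatic_number A chi ->
     (~~ odd chi -> (1 / 4 + 1 / (4 * (chi%:R - 1))) * wD A w <= mac_D A w) /\
     (odd chi -> (1 / 4 + 1 / (4 * chi%:R)) * wD A w <= mac_D A w)).
Proof.
move=> wdD.
have upper := mac_le_macG_rplus A w.
split; first by move=> _ k; exact: rplus_mincut_le_mac.
split; first by split; [exact: macG_half_le_mac | exact: upper].
split; first by split; [exact: macG_rplus_le_mac | exact: upper].
exact: chromatic_bound.
Qed.
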